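(* Let $N_e, N_r \ge 1$ be integers. For every binary tensor $\mathcal{X} = (x_{ijk}) \in \{0,1\}^{N_e \times N_e \times N_r}$ there exist a positive integer $D$, a real number $\Delta > 0$, and matrices $A \in \{+\Delta,-\Delta\}^{N_e \times D}$, $B \in \{+\Delta,-\Delta\}^{N_e \times D}$, $C \in \{+\Delta,-\Delta\}^{N_r \times D}$ such that $$\mathcal{X} = \sum_{d=1}^{D} \mathbf{a}_d \otimes \mathbf{b}_d \otimes \mathbf{c}_d,$$ i.e. $x_{ijk} = \sum_{d=1}^D A_{id} B_{jd} C_{kd}$ for all $i,j \in [N_e]$, $k \in [N_r]$.
   Context: $[n]=\{1,\dots,n\}$. $\mathbf{a}_d,\mathbf{b}_d,\mathbf{c}_d$ denote the $d$-th columns of $A,B,C$, and $\mathbf{u}\otimes\mathbf{v}\otimes\mathbf{w}$ is the 3-way outer product with entries $(\mathbf{u}\otimes\mathbf{v}\otimes\mathbf{w})_{ijk}=u_iv_jw_k$. *)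

(* Reals are rendered as an arbitrary realFieldType R (the
   statement is purely algebraic/order-theoretic, so this is a generalisation
   that specialises to the reals). *)
From HB Require Import structures.
From mathcomp Require Import all_boot all_order all_algebra.
Set Implicit Arguments. Unset Strict Implicit. Unset Printing Implicit Defensive.
Import Order.TTheory GRing.Theory Num.Theory.
Local Open Scope ring_scope.

Definition binary_tensor (Ne Nr : nat) := 'I_Ne -> 'I_Ne -> 'I_Nr -> bool.

Definition pm_matrix (R : ringType) (m n : nat) (Delta : R) (M : 'M[R]_(m, n)) :=
  forall i j, M i j = Delta \/ M i j = - Delta.

From HB Require Import structures.
From mathcomp Require Import all_boot all_order all_algebra.
Import Order.TTheory GRing.Theory Num.Theory.
Local Open Scope ring_scope.

(* A bit b is half_sign true b + half_sign false b with both summands in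
   {1/2, -1/2}, so a product of three bits is a sum of eight products of such
   signs.  Writing X as the sum over (i', j', k') of the rank-one tensors
   e_i' (x) e_j' (x) (X i' j' k' e_k'), whose factors are 0/1 vectors, hence
   gives a CP decomposition all of whose factor entries are 1/2 or -1/2. *)

Section HalfSign.
Variable R : numFieldType.

Definition half_sign (s b : bool) : R := if s || b then 2^-1 else - 2^-1.

Lemma half_sign_pm s b : half_sign s b = 2^-1 \/ half_sign s b = - 2^-1.
Proof. by rewrite /half_sign; case: (s || b); [left | right]. Qed.

Lemma sum_half_sign b : \sum_(s : bool) half_sign s b = b%:R.
Proof.
rewrite big_bool /half_sign /=; case: b => /=; last by rewrite subrr.
by rewrite -mulr2n -(mulr_natr (2^-1)) mulVf // pnatr_eq0.
Qed.

Lemma sum_half_sign3 b1 b2 b3 :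
  \sum_(s : bool * bool * bool)
     half_sign s.1.1 b1 * half_sign s.1.2 b2 * half_sign s.2 b3
  = (b1 && b2 && b3)%:R.
Proof.
rewrite -(pair_bigA _ (fun s12 s3 =>
  half_sign s12.1 b1 * half_sign s12.2 b2 * half_sign s3 b3)) /=.
under eq_bigr do rewrite -mulr_sumr sum_half_sign.
rewrite -mulr_suml -(pair_bigA _ (fun s1 s2 => half_sign s1 b1 * half_sign s2 b2)) /=.
under eq_bigr do rewrite -mulr_sumr sum_half_sign.
by rewrite -mulr_suml sum_half_sign -!natrM !mulnb.
Qed.

End HalfSign.

Lemma sum_delta3 (R : numFieldType) (I J K : finType) (P : I -> J -> K -> bool)
    (i : I) (j : J) (k : K) :
  \sum_(p : I * J * K)
     ((i == p.1.1) && (j == p.1.2) && (P p.1.1 p.1.2 p.2 && (k == p.2)))%:R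
  = (P i j k)%:R :> R.
Proof.
rewrite (bigD1 (i, j, k)) //= !eqxx /= andbT big1 ?addr0 // => -[[i' j'] k'] /=.
rewrite !xpair_eqE; apply: contraNeq; rewrite pnatr_eq0 eqb0 negbK.
by case/and3P=> /andP[/eqP-> /eqP->] _ /eqP->; rewrite !eqxx.
Qed.

Section SignDecomposition.
Variables (R : numFieldType) (Ne Nr : nat) (X : binary_tensor Ne Nr).

(* A rank-one term is indexed by its position (i', j', k') and a sign pattern. *)
Definition sign_term : finType := ('I_Ne * 'I_Ne * 'I_Nr * (bool * bool * bool))%type.

Local Notation D := #|{: sign_term}|.
Local Notation t d := (enum_val (d : 'I_D) : sign_term).

Definition sign_factorA : 'M[R]_(Ne, D) :=
  \matrix_(i, d) half_sign R (t d).2.1.1 (i == (t d).1.1.1).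
Definition sign_factorB : 'M[R]_(Ne, D) :=
  \matrix_(j, d) half_sign R (t d).2.1.2 (j == (t d).1.1.2).
Definition sign_factorC : 'M[R]_(Nr, D) :=
  \matrix_(k, d)
    half_sign R (t d).2.2 (X (t d).1.1.1 (t d).1.1.2 (t d).1.2 && (k == (t d).1.2)).

Lemma sign_term_card_gt0 : (0 < Ne)%N -> (0 < Nr)%N -> (0 < D)%N.
Proof.
move=> Ne_gt0 Nr_gt0; apply/card_gt0P.
by exists (Ordinal Ne_gt0, Ordinal Ne_gt0, Ordinal Nr_gt0, (true, true, true)).
Qed.

Lemma sign_factor_decomposition i j k :
  (X i j k)%:R = \sum_(d < D) sign_factorA i d * sign_factorB j d * sign_factorC k d.
Proof.
under eq_bigr do rewrite !mxE.
rewrite -(big_enum_val (A := predT) (fun p : sign_term =>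
  half_sign R p.2.1.1 (i == p.1.1.1) * half_sign R p.2.1.2 (j == p.1.1.2) *
  half_sign R p.2.2 (X p.1.1.1 p.1.1.2 p.1.2 && (k == p.1.2)))) /=.
rewrite -(pair_bigA _ (fun (p : 'I_Ne * 'I_Ne * 'I_Nr) (s : bool * bool * bool) =>
  half_sign R s.1.1 (i == p.1.1) * half_sign R s.1.2 (j == p.1.2) *
  half_sign R s.2 (X p.1.1 p.1.2 p.2 && (k == p.2)))) /=.
under eq_bigr do rewrite sum_half_sign3.
by rewrite sum_delta3.
Qed.

End SignDecomposition.

Theorem theorem1 (R : realFieldType) (Ne Nr : nat) (hNe : (1 <= Ne)%N)
  (hNr : (1 <= Nr)%N) (X : binary_tensor Ne Nr) :
  exists (D : nat) (Delta : R) (A : 'M[R]_(Ne, D)) (B : 'M[R]_(Ne, D))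
         (C : 'M[R]_(Nr, D)),
    [/\ (0 < D)%N, 0 < Delta, pm_matrix Delta A,
        pm_matrix Delta B /\ pm_matrix Delta C &
        forall (i j : 'I_Ne) (k : 'I_Nr),
          (X i j k)%:R = \sum_(d < D) A i d * B j d * C k d].
Proof.
exists _, 2^-1, (sign_factorA R Ne Nr), (sign_factorB R Ne Nr),
  (sign_factorC R Ne Nr X).
split.
- exact: sign_term_card_gt0.
- by rewrite invr_gt0 ltr0n.
- by move=> i d; rewrite mxE; apply: half_sign_pm.
- by split=> ? ?; rewrite mxE; apply: half_sign_pm.
- exact: sign_factor_decomposition.
Qed.
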